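(* Let $r\in\{0,1\}$ and let $k,l,a_1,a_2,C_1,C_2,a,b,c,b_1,c_1$ be real constants. Put $\alpha(t)=kt+l$, $X=x\cos\alpha+y\sin\alpha$, $Y=-x\sin\alpha+y\cos\alpha$, $\mathbf e_1=(\cos\alpha,\sin\alpha,0)^t$, $\mathbf e_2=(-\sin\alpha,\cos\alpha,0)^t$, and define functions of $Y$: if $r=0$: $\phi=e^{a_1Y}-ae^{-a_1Y}$, $\psi=e^{a_1Y}+ae^{-a_1Y}$, $\xi=be^{a_1Y}-ce^{-a_1Y}$, $\zeta=be^{a_1Y}+ce^{-a_1Y}$, $\vartheta=b_1e^{a_1Y}-c_1e^{-a_1Y}$; if $r=1$: $\phi=\sin(a_1Y)$, $\psi=\cos(a_1Y)$, $\xi=c\sin(a_1Y+b)$, $\zeta=c\cos(a_1Y+b)$, $\vartheta=c_1\sin(a_1Y+b_1)$. Let $$W_1=a_1\big(\vartheta+a_2Y\phi-X\zeta-a_1a_2X^2\psi\big),\qquad W_2=\xi+2a_1a_2X\phi,$$ and $$\mathbf v=k(-y,x,0)^t+C_1e^{(-1)^r\nu a_1^2t}\big(W_1\mathbf e_1+W_2\mathbf e_2\big),\qquad \mathbf H=C_2e^{(-1)^r\eta a_1^2t}\big(W_1\mathbf e_1+W_2\mathbf e_2\big).$$ Then there exists a smooth function $p$ on $\mathbb R\times\mathbb R^3$ such that $(\mathbf v,\mathbf H,p)$ satisfies the MHD system on $\mathbb R\times\mathbb R^3$.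
   Context: Throughout, $\nu,\eta,\mu_0,\rho$ are positive constants. The MHD system for $\mathbf v=(u,v,w)^t$, $\mathbf H=(H^1,H^2,H^3)^t$, $p$, functions of $(t,x,y,z)$, is $$\nabla\cdot\mathbf v=0,\quad \mathbf v_t+(\mathbf v\cdot\nabla)\mathbf v-\mu_0(\mathbf H\times\operatorname{rot}\mathbf H)+\tfrac1\rho\nabla p=\nu\Delta\mathbf v,\quad \nabla\cdot\mathbf H=0,\quad \mathbf H_t=\operatorname{rot}(\mathbf v\times\mathbf H)+\eta\Delta\mathbf H,$$ with $\operatorname{rot}$ the curl and $\Delta$ the componentwise Laplacian in $(x,y,z)$. Here $X,Y,\mathbf e_1,\mathbf e_2$ depend on $t$ through $\alpha(t)=kt+l$. *)

From Stdlib Require Import Reals List ClassicalEpsilon.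
Open Scope R_scope.

(** Scalar functions of (t, x, y, z). *)
Definition F4 := R -> R -> R -> R -> R.

Inductive dir := Dt | Dx | Dy | Dz.

Definition line (d : dir) (f : F4) (t x y z : R) : R -> R :=
  match d with
  | Dt => fun s => f s x y z
  | Dx => fun s => f t s y z
  | Dy => fun s => f t x s z
  | Dz => fun s => f t x y s
  end.

Definition coord (d : dir) (t x y z : R) : R :=
  match d with Dt => t | Dx => x | Dy => y | Dz => z end.

Definition is_partial (d : dir) (f g : F4) : Prop :=
  forall t x y z, derivable_pt_lim (line d f t x y z) (coord d t x y z) (g t x y z).

(** The partial derivative operator (meaningful where the derivative exists). *)
Definition pd (d : dir) (f : F4) : F4 :=
  fun t x y z => epsilon (inhabits 0)
    (fun l => derivable_pt_lim (line d f t x y z) (coord d t x y z) l).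

Definition cont4 (f : F4) : Prop :=
  forall t x y z eps, 0 < eps -> exists delta, 0 < delta /\
    forall t' x' y' z', Rabs (t' - t) < delta -> Rabs (x' - x) < delta ->
      Rabs (y' - y) < delta -> Rabs (z' - z) < delta ->
      Rabs (f t' x' y' z' - f t x y z) < eps.

Inductive iter_partial : list dir -> F4 -> F4 -> Prop :=
  | ip_nil : forall f, iter_partial nil f f
  | ip_cons : forall d ds f f' g,
      is_partial d f f' -> iter_partial ds f' g -> iter_partial (d :: ds) f g.

Definition smooth (f : F4) : Prop :=
  forall ds : list dir, exists g, iter_partial ds f g /\ cont4 g.

Record vec := mkvec { cx : F4; cy : F4; cz : F4 }.

Definition smooth_vec (V : vec) : Prop :=
  smooth (cx V) /\ smooth (cy V) /\ smooth (cz V).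

Definition divg (V : vec) : F4 := fun t x y z =>
  pd Dx (cx V) t x y z + pd Dy (cy V) t x y z + pd Dz (cz V) t x y z.

Definition rot (V : vec) : vec := mkvec
  (fun t x y z => pd Dy (cz V) t x y z - pd Dz (cy V) t x y z)
  (fun t x y z => pd Dz (cx V) t x y z - pd Dx (cz V) t x y z)
  (fun t x y z => pd Dx (cy V) t x y z - pd Dy (cx V) t x y z).

Definition cross (V W : vec) : vec := mkvec
  (fun t x y z => cy V t x y z * cz W t x y z - cz V t x y z * cy W t x y z)
  (fun t x y z => cz V t x y z * cx W t x y z - cx V t x y z * cz W t x y z)
  (fun t x y z => cx V t x y z * cy W t x y z - cy V t x y z * cx W t x y z).

Definition lap (f : F4) : F4 := fun t x y z =>
  pd Dx (pd Dx f) t x y z + pd Dy (pd Dy f) t x y z + pd Dz (pd Dz f) t x y z.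

Definition advect (V : vec) (f : F4) : F4 := fun t x y z =>
  cx V t x y z * pd Dx f t x y z + cy V t x y z * pd Dy f t x y z
  + cz V t x y z * pd Dz f t x y z.

(** One component (selected by [sel], with matching spatial direction [d]) of
    v_t + (v.grad)v - mu0 (H x rot H) + (1/rho) grad p = nu Lap v. *)
Definition momentum_comp (nu mu0 rho : R) (sel : vec -> F4) (d : dir)
  (v H : vec) (p : F4) (t x y z : R) : Prop :=
  pd Dt (sel v) t x y z + advect v (sel v) t x y z
  - mu0 * sel (cross H (rot H)) t x y z + / rho * pd d p t x y z
  = nu * lap (sel v) t x y z.

Definition induction_comp (eta : R) (sel : vec -> F4) (v H : vec) (t x y z : R) : Prop :=
  pd Dt (sel H) t x y z = sel (rot (cross v H)) t x y z + eta * lap (sel H) t x y z.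

Definition MHD (nu eta mu0 rho : R) (v H : vec) (p : F4) : Prop :=
  forall t x y z,
    divg v t x y z = 0 /\
    momentum_comp nu mu0 rho cx Dx v H p t x y z /\
    momentum_comp nu mu0 rho cy Dy v H p t x y z /\
    momentum_comp nu mu0 rho cz Dz v H p t x y z /\
    divg H t x y z = 0 /\
    induction_comp eta cx v H t x y z /\
    induction_comp eta cy v H t x y z /\
    induction_comp eta cz v H t x y z.

Definition alph (k l t : R) : R := k * t + l.
Definition Xc (k l t x y : R) : R := x * cos (alph k l t) + y * sin (alph k l t).
Definition Yc (k l t x y : R) : R := - x * sin (alph k l t) + y * cos (alph k l t).

Definition phiF (r : nat) (a1 a Y : R) : R :=
  match r with O => exp (a1 * Y) - a * exp (- (a1 * Y)) | _ => sin (a1 * Y) end.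
Definition psiF (r : nat) (a1 a Y : R) : R :=
  match r with O => exp (a1 * Y) + a * exp (- (a1 * Y)) | _ => cos (a1 * Y) end.
Definition xiF (r : nat) (a1 b c Y : R) : R :=
  match r with O => b * exp (a1 * Y) - c * exp (- (a1 * Y))
             | _ => c * sin (a1 * Y + b) end.
Definition zetaF (r : nat) (a1 b c Y : R) : R :=
  match r with O => b * exp (a1 * Y) + c * exp (- (a1 * Y))
             | _ => c * cos (a1 * Y + b) end.
Definition thetaF (r : nat) (a1 b1 c1 Y : R) : R :=
  match r with O => b1 * exp (a1 * Y) - c1 * exp (- (a1 * Y))
             | _ => c1 * sin (a1 * Y + b1) end.

Definition W1 (r : nat) (a1 a2 a b c b1 c1 X Y : R) : R :=
  a1 * (thetaF r a1 b1 c1 Y + a2 * Y * phiF r a1 a Y - X * zetaF r a1 b c Y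
        - a1 * a2 * X ^ 2 * psiF r a1 a Y).
Definition W2 (r : nat) (a1 a2 a b c X Y : R) : R :=
  xiF r a1 b c Y + 2 * a1 * a2 * X * phiF r a1 a Y.

(** Components of W1 e1 + W2 e2 (third component is 0). *)
Definition S1 (r : nat) (k l a1 a2 a b c b1 c1 t x y : R) : R :=
  let X := Xc k l t x y in let Y := Yc k l t x y in
  W1 r a1 a2 a b c b1 c1 X Y * cos (alph k l t) - W2 r a1 a2 a b c X Y * sin (alph k l t).
Definition S2 (r : nat) (k l a1 a2 a b c b1 c1 t x y : R) : R :=
  let X := Xc k l t x y in let Y := Yc k l t x y in
  W1 r a1 a2 a b c b1 c1 X Y * sin (alph k l t) + W2 r a1 a2 a b c X Y * cos (alph k l t).

Definition vsol (nu : R) (r : nat) (k l a1 a2 C1 a b c b1 c1 : R) : vec := mkvec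
  (fun t x y z => k * (- y) + C1 * exp ((-1) ^ r * nu * a1 ^ 2 * t) * S1 r k l a1 a2 a b c b1 c1 t x y)
  (fun t x y z => k * x + C1 * exp ((-1) ^ r * nu * a1 ^ 2 * t) * S2 r k l a1 a2 a b c b1 c1 t x y)
  (fun t x y z => 0).

Definition Hsol (eta : R) (r : nat) (k l a1 a2 C2 a b c b1 c1 : R) : vec := mkvec
  (fun t x y z => C2 * exp ((-1) ^ r * eta * a1 ^ 2 * t) * S1 r k l a1 a2 a b c b1 c1 t x y)
  (fun t x y z => C2 * exp ((-1) ^ r * eta * a1 ^ 2 * t) * S2 r k l a1 a2 a b c b1 c1 t x y)
  (fun t x y z => 0).

From Stdlib Require Import Reals Lra FunctionalExtensionality ClassicalEpsilon.
(* Imported after Reals, whose [Dx] would otherwise shadow the direction [Dx]. *)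
Open Scope R_scope.

(* Write s = (-1)^r, A(t) = C1 e^{s nu a1^2 t}, B(t) = C2 e^{s eta a1^2 t}, and let
   X, Y be the coordinates rotating with angle alpha(t) = k t + l.  Both fields are
   of the form  k(-y,x,0) (velocity only)  +  amplitude * (W1 e1 + W2 e2), with
     W1 = P0(Y) + X P1(Y) + X^2 P2(Y),   W2 = Q0(Y) + 2 X Q1(Y).
   If the six profiles satisfy the linear system [profile_system] below, then
   Phi = Rz(Y) - X Q0(Y) - X^2 Q1(Y) is a stream function (W1 = Phi_Y, W2 = -Phi_X)
   with Laplacian s a1^2 Phi; this makes (v, H) an exact MHD solution with the explicit
   pressure [pressure] (rigid rotation + Bernoulli term + stream-function term). *)

(* Differentiation rules in pointwise-lambda form, matched by the tactics below. *)
Lemma D_const (c x : R) : derivable_pt_lim (fun _ => c) x 0.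
Proof. apply derivable_pt_lim_const. Qed.
Lemma D_id (x : R) : derivable_pt_lim (fun s => s) x 1.
Proof. apply derivable_pt_lim_id. Qed.
Lemma D_plus a b x la lb : derivable_pt_lim a x la -> derivable_pt_lim b x lb ->
  derivable_pt_lim (fun s => a s + b s) x (la + lb).
Proof. apply derivable_pt_lim_plus. Qed.
Lemma D_minus a b x la lb : derivable_pt_lim a x la -> derivable_pt_lim b x lb ->
  derivable_pt_lim (fun s => a s - b s) x (la - lb).
Proof. apply derivable_pt_lim_minus. Qed.
Lemma D_opp a x la : derivable_pt_lim a x la -> derivable_pt_lim (fun s => - a s) x (- la).
Proof. apply derivable_pt_lim_opp. Qed.
Lemma D_mult a b x la lb : derivable_pt_lim a x la -> derivable_pt_lim b x lb ->
  derivable_pt_lim (fun s => a s * b s) x (la * b x + a x * lb).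
Proof. apply derivable_pt_lim_mult. Qed.
Lemma D_comp (F DF : R -> R) a x la : (forall y, derivable_pt_lim F y (DF y)) ->
  derivable_pt_lim a x la -> derivable_pt_lim (fun s => F (a s)) x (DF (a x) * la).
Proof. intros HF Ha. apply (derivable_pt_lim_comp a F); auto. Qed.
Lemma D_pow a n x la : derivable_pt_lim a x la ->
  derivable_pt_lim (fun s => a s ^ n) x (INR n * a x ^ pred n * la).
Proof.
  apply (D_comp (fun y => y ^ n) (fun y => INR n * y ^ pred n)).
  intros; apply derivable_pt_lim_pow.
Qed.

(* [deriv f] computes the derivative of a one-variable expression [f]; an unknown
   function [F] is differentiated through a context hypothesis [forall y,
   derivable_pt_lim F y (DF y)].  [dprove] proves the computed value correct. *)
Ltac deriv f :=
  lazymatch f with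
  | (fun _ => ?c) => constr:(fun _ : R => 0)
  | (fun s => s) => constr:(fun _ : R => 1)
  | (fun s => @?a s + @?b s) => let da := deriv a in let db := deriv b in
      constr:(fun s : R => da s + db s)
  | (fun s => @?a s - @?b s) => let da := deriv a in let db := deriv b in
      constr:(fun s : R => da s - db s)
  | (fun s => - @?a s) => let da := deriv a in constr:(fun s : R => - da s)
  | (fun s => @?a s * @?b s) => let da := deriv a in let db := deriv b in
      constr:(fun s : R => da s * b s + a s * db s)
  | (fun s => @?a s ^ ?n) => let da := deriv a in
      constr:(fun s : R => INR n * a s ^ pred n * da s)
  | (fun s => exp (@?a s)) => let da := deriv a in constr:(fun s : R => exp (a s) * da s)
  | (fun s => sin (@?a s)) => let da := deriv a in constr:(fun s : R => cos (a s) * da s)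
  | (fun s => cos (@?a s)) => let da := deriv a in constr:(fun s : R => - sin (a s) * da s)
  | (fun s => ?F (@?a s)) =>
      let da := deriv a in
      lazymatch goal with
      | H : forall y, derivable_pt_lim F y (@?DF y) |- _ =>
          constr:(fun s : R => DF (a s) * da s)
      end
  end.

Ltac dprove :=
  lazymatch goal with
  | |- derivable_pt_lim (fun _ => ?c) _ _ => apply D_const
  | |- derivable_pt_lim (fun s => s) _ _ => apply D_id
  | |- derivable_pt_lim (fun s => @?a s + @?b s) _ _ => apply (D_plus a b); dprove
  | |- derivable_pt_lim (fun s => @?a s - @?b s) _ _ => apply (D_minus a b); dprove
  | |- derivable_pt_lim (fun s => - @?a s) _ _ => apply (D_opp a); dprove
  | |- derivable_pt_lim (fun s => @?a s * @?b s) _ _ => apply (D_mult a b); dprove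
  | |- derivable_pt_lim (fun s => @?a s ^ ?n) _ _ => apply (D_pow a n); dprove
  | |- derivable_pt_lim (fun s => exp (@?a s)) _ _ =>
      apply (D_comp exp exp a); [exact derivable_pt_lim_exp | dprove]
  | |- derivable_pt_lim (fun s => sin (@?a s)) _ _ =>
      apply (D_comp sin cos a); [exact derivable_pt_lim_sin | dprove]
  | |- derivable_pt_lim (fun s => cos (@?a s)) _ _ =>
      apply (D_comp cos (fun y => - sin y) a); [exact derivable_pt_lim_cos | dprove]
  | |- derivable_pt_lim (fun s => ?F (@?a s)) _ _ =>
      lazymatch goal with
      | H : forall y, derivable_pt_lim F y (@?DF y) |- _ =>
          apply (D_comp F DF a); [exact H | dprove]
      end
  end.

Lemma D_value f x l1 l2 : derivable_pt_lim f x l1 -> l1 = l2 -> derivable_pt_lim f x l2.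
Proof. intros H <-; exact H. Qed.

Ltac deriv_goal := lazymatch goal with |- derivable_pt_lim ?f ?x _ =>
  let f' := eval cbv beta iota in f in
  let L := deriv f' in apply (D_value f' x (L x)); [dprove | cbv beta; simpl INR] end.

(* The partial-derivative operator [pd] (defined by choice) agrees with any
   everywhere-valid partial derivative, by uniqueness of limits. *)
Lemma pd_eq d f (G : F4) : is_partial d f G -> pd d f = G.
Proof.
  intros H. apply functional_extensionality; intro t; apply functional_extensionality; intro x.
  apply functional_extensionality; intro y; apply functional_extensionality; intro z.
  unfold pd. apply (uniqueness_limite (line d f t x y z) (coord d t x y z)); [|apply H].
  apply epsilon_spec. eexists; apply H.
Qed.

Ltac partial_of d f :=
  constr:(fun tt_ xx_ yy_ zz_ : R => ltac:(
    let L := eval cbv beta delta [line] iota in (line d f tt_ xx_ yy_ zz_) in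
    let L := eval cbv beta in L in
    let dL := deriv L in
    let c := eval cbv beta delta [coord] iota in (coord d tt_ xx_ yy_ zz_) in
    exact (dL c))).

Ltac pd_step :=
  match goal with |- context [pd ?d ?f] =>
    lazymatch f with context [pd] => fail | _ => idtac end;
    let f' := eval cbv beta in f in
    let G := partial_of d f' in
    let G := eval cbv beta in G in
    let E := fresh "E" in
    assert (E : pd d f = G)
      by (apply pd_eq; intros ? ? ? ?; cbv beta delta [line coord] iota; dprove);
    rewrite E; clear E
  end.

Lemma cont4_const c : cont4 (fun _ _ _ _ => c).
Proof.
  intros t x y z e He. exists 1; split; [lra|].
  intros; unfold Rminus; rewrite Rplus_opp_r, Rabs_R0; exact He.
Qed.

Lemma cont4_coord d : cont4 (fun t x y z => coord d t x y z).
Proof. intros t x y z e He. exists e; split; [exact He|]. intros; destruct d; simpl; auto. Qed.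

Lemma cont4_plus f g : cont4 f -> cont4 g -> cont4 (fun t x y z => f t x y z + g t x y z).
Proof.
  intros Hf Hg t x y z e He.
  destruct (Hf t x y z (e/2)) as [d1 [Hd1 H1]]; [lra|].
  destruct (Hg t x y z (e/2)) as [d2 [Hd2 H2]]; [lra|].
  exists (Rmin d1 d2); split; [apply Rmin_pos; auto|].
  intros t' x' y' z' Ht Hx Hy Hz.
  pose proof (Rmin_l d1 d2); pose proof (Rmin_r d1 d2).
  specialize (H1 t' x' y' z' ltac:(lra) ltac:(lra) ltac:(lra) ltac:(lra)).
  specialize (H2 t' x' y' z' ltac:(lra) ltac:(lra) ltac:(lra) ltac:(lra)).
  replace (f t' x' y' z' + g t' x' y' z' - (f t x y z + g t x y z)) with
    ((f t' x' y' z' - f t x y z) + (g t' x' y' z' - g t x y z)) by ring.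
  eapply Rle_lt_trans; [apply Rabs_triang|]. lra.
Qed.

Lemma cont4_comp (h : R -> R) f : (forall y, continuity_pt h y) -> cont4 f ->
  cont4 (fun t x y z => h (f t x y z)).
Proof.
  intros Hh Hf t x y z e He.
  destruct (Hh (f t x y z) e He) as [a [Ha H1]].
  destruct (Hf t x y z a Ha) as [d [Hd H2]].
  exists d; split; [exact Hd|]. intros t' x' y' z' Ht Hx Hy Hz.
  specialize (H2 t' x' y' z' Ht Hx Hy Hz).
  destruct (Req_dec (f t x y z) (f t' x' y' z')) as [E|E].
  - rewrite E; unfold Rminus; rewrite Rplus_opp_r, Rabs_R0; exact He.
  - apply (H1 (f t' x' y' z')). split; [split; [exact I|exact E]|exact H2].
Qed.

Lemma continuous_of_derivable (h h' : R -> R) :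
  (forall y, derivable_pt_lim h y (h' y)) -> forall y, continuity_pt h y.
Proof. intros Hh y; apply derivable_continuous_pt; exists (h' y); exact (Hh y). Qed.

(* Products reduce to sums and squares by polarization: fg = ((f+g)^2 - (f-g)^2)/4. *)
Lemma cont4_mult f g : cont4 f -> cont4 g -> cont4 (fun t x y z => f t x y z * g t x y z).
Proof.
  intros Hf Hg.
  assert (Hopp : forall h, cont4 h -> cont4 (fun t x y z => - h t x y z)).
  { intros h Hh; apply (cont4_comp Ropp); [|exact Hh].
    eapply continuous_of_derivable; intro u; apply (D_opp (fun u => u)), D_id. }
  assert (Hsq : forall h, cont4 h -> cont4 (fun t x y z => / 4 * (h t x y z * h t x y z))).
  { intros h Hh; apply (cont4_comp (fun u => / 4 * (u * u))); [|exact Hh].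
    eapply continuous_of_derivable; intro u.
    apply (D_mult (fun _ => / 4) (fun u => u * u));
      [apply D_const | apply (D_mult (fun u => u) (fun u => u)); apply D_id]. }
  assert (E : (fun t x y z => f t x y z * g t x y z) =
    (fun t x y z => / 4 * ((f t x y z + g t x y z) * (f t x y z + g t x y z))
       + - (/ 4 * ((f t x y z + - g t x y z) * (f t x y z + - g t x y z))))).
  { do 4 (apply functional_extensionality; intro); field. }
  rewrite E; apply cont4_plus.
  - apply (Hsq (fun t x y z => f t x y z + g t x y z)), cont4_plus; assumption.
  - apply (Hopp (fun t x y z => / 4 * _)), (Hsq (fun t x y z => f t x y z + - g t x y z)).
    apply cont4_plus; [exact Hf | exact (Hopp g Hg)].
Qed.

Fixpoint Ck (n : nat) (f : F4) : Prop :=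
  match n with
  | O => cont4 f
  | S m => cont4 f /\ forall d, exists g, is_partial d f g /\ Ck m g
  end.

Lemma Ck_pred n f : Ck (S n) f -> Ck n f.
Proof.
  revert f; induction n as [|n IH]; intros f [Hc Hd]; [exact Hc|].
  split; [exact Hc|]. intro d. destruct (Hd d) as [g [P Q]]. exists g; auto.
Qed.

Lemma Ck_iter_partial ds : forall f, Ck (length ds) f ->
  exists g, iter_partial ds f g /\ cont4 g.
Proof.
  induction ds as [|d ds IH]; intros f H.
  - exists f; split; [constructor|exact H].
  - destruct H as [_ H]. destruct (H d) as [g [P Q]].
    destruct (IH g Q) as [h [P2 Q2]]. exists h; split; [econstructor; eauto|exact Q2].
Qed.

Lemma smooth_of_Ck f : (forall n, Ck n f) -> smooth f.
Proof. intros H ds. apply Ck_iter_partial, H. Qed.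

Lemma Ck_const c n : Ck n (fun _ _ _ _ => c).
Proof.
  revert c; induction n as [|n IH]; intro c; [apply cont4_const|]. split; [apply cont4_const|].
  intro d; exists (fun _ _ _ _ => 0); split; [|apply IH].
  intros t x y z; destruct d; simpl; apply D_const.
Qed.

Lemma Ck_coord d n : Ck n (fun t x y z => coord d t x y z).
Proof.
  destruct n as [|n]; [apply cont4_coord|]. split; [apply cont4_coord|].
  intro e; destruct d, e;
    first [ exists (fun _ _ _ _ => 1); split; [intros ? ? ? ?; simpl; apply D_id | apply Ck_const]
          | exists (fun _ _ _ _ => 0); split; [intros ? ? ? ?; simpl; apply D_const | apply Ck_const]].
Qed.

Lemma Ck_plus n : forall f g, Ck n f -> Ck n g -> Ck n (fun t x y z => f t x y z + g t x y z).
Proof.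
  induction n as [|n IH]; intros f g Hf Hg; [apply cont4_plus; assumption|].
  destruct Hf as [cf Hf], Hg as [cg Hg]. split; [apply cont4_plus; assumption|].
  intro d; destruct (Hf d) as [f' [Pf Sf]], (Hg d) as [g' [Pg Sg]].
  exists (fun t x y z => f' t x y z + g' t x y z); split; [|apply IH; assumption].
  intros t x y z; specialize (Pf t x y z); specialize (Pg t x y z);
    destruct d; exact (D_plus _ _ _ _ _ Pf Pg).
Qed.

Lemma Ck_mult n : forall f g, Ck n f -> Ck n g -> Ck n (fun t x y z => f t x y z * g t x y z).
Proof.
  induction n as [|n IH]; intros f g Hf Hg; [apply cont4_mult; assumption|].
  pose proof (Ck_pred _ _ Hf) as Hf0; pose proof (Ck_pred _ _ Hg) as Hg0.
  destruct Hf as [cf Hf], Hg as [cg Hg]. split; [apply cont4_mult; assumption|].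
  intro d; destruct (Hf d) as [f' [Pf Sf]], (Hg d) as [g' [Pg Sg]].
  exists (fun t x y z => f' t x y z * g t x y z + f t x y z * g' t x y z); split.
  - intros t x y z; specialize (Pf t x y z); specialize (Pg t x y z);
      destruct d; exact (D_mult _ _ _ _ _ Pf Pg).
  - apply Ck_plus; apply IH; assumption.
Qed.

Lemma Ck_opp n f : Ck n f -> Ck n (fun t x y z => - f t x y z).
Proof.
  intro H. replace (fun t x y z => - f t x y z) with (fun t x y z => -1 * f t x y z).
  - exact (Ck_mult n _ _ (Ck_const (-1) n) H).
  - do 4 (apply functional_extensionality; intro); ring.
Qed.

Lemma Ck_minus n f g : Ck n f -> Ck n g -> Ck n (fun t x y z => f t x y z - g t x y z).
Proof. intros; apply (Ck_plus n f (fun t x y z => - g t x y z)); [|apply Ck_opp]; assumption. Qed.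

Lemma Ck_pow n f m : Ck n f -> Ck n (fun t x y z => f t x y z ^ m).
Proof. intro H; induction m; simpl; [apply Ck_const | apply Ck_mult; assumption]. Qed.

Definition comp_smooth (h : R -> R) : Prop :=
  forall n g, Ck n g -> Ck n (fun t x y z => h (g t x y z)).

(* Composition principle for a family [K] of pairs (h, h'), h' the derivative of h: if, at each
   order, C^n-composability of all members of the family implies that of all the
   derivatives h', then every member is [comp_smooth]. *)
Lemma comp_smooth_family (K : (R -> R) -> (R -> R) -> Prop) :
  (forall h h', K h h' -> forall y, derivable_pt_lim h y (h' y)) ->
  (forall n g, Ck n g -> (forall h h', K h h' -> Ck n (fun t x y z => h (g t x y z))) ->
     forall h h', K h h' -> Ck n (fun t x y z => h' (g t x y z))) ->
  forall h h', K h h' -> comp_smooth h.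
Proof.
  intros HD HC h h' HK n; revert h h' HK.
  assert (Hcont : forall h h', K h h' -> forall y, continuity_pt h y).
  { intros h h' HK; exact (continuous_of_derivable h h' (HD _ _ HK)). }
  induction n as [|n IH]; intros h h' HK g Hg; [exact (cont4_comp h g (Hcont _ _ HK) Hg)|].
  pose proof (Ck_pred _ _ Hg) as Hg0. destruct Hg as [cg Hg].
  split; [exact (cont4_comp h g (Hcont _ _ HK) cg)|].
  intro d; destruct (Hg d) as [g' [Pg Sg]].
  exists (fun t x y z => h' (g t x y z) * g' t x y z); split.
  - intros t x y z; specialize (Pg t x y z).
    destruct d; exact (D_comp h h' _ _ _ (HD _ _ HK) Pg).
  - apply Ck_mult; [|exact Sg].
    exact (HC n g Hg0 (fun h0 h0' HK0 => IH h0 h0' HK0 g Hg0) h h' HK).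
Qed.

Lemma comp_smooth_exp : comp_smooth exp.
Proof.
  refine (comp_smooth_family (fun h h' => h = exp /\ h' = exp) _ _ exp exp _); [| |auto].
  - intros h h' [-> ->]; apply derivable_pt_lim_exp.
  - intros m g _ IH h h' [-> ->]; apply (IH exp exp); auto.
Qed.

(* sin and cos form a family closed under differentiation. *)
Lemma comp_smooth_sin_cos : comp_smooth sin /\ comp_smooth cos.
Proof.
  set (K := fun h h' : R -> R => (h = sin /\ h' = cos) \/ (h = cos /\ h' = (fun y => - sin y))).
  assert (HD : forall h h', K h h' -> forall y, derivable_pt_lim h y (h' y)).
  { intros h h' [[-> ->]|[-> ->]]; [apply derivable_pt_lim_sin | apply derivable_pt_lim_cos]. }
  assert (HC : forall n g, Ck n g -> (forall h h', K h h' -> Ck n (fun t x y z => h (g t x y z))) ->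
     forall h h', K h h' -> Ck n (fun t x y z => h' (g t x y z))).
  { intros m g _ IH h h' [[-> ->]|[-> ->]].
    - apply (IH cos (fun y => - sin y)); right; auto.
    - apply Ck_opp, (IH sin cos); left; auto. }
  split; [apply (comp_smooth_family K HD HC sin cos) | apply (comp_smooth_family K HD HC cos (fun y => - sin y))];
    unfold K; auto.
Qed.

Ltac Ck_auto :=
  lazymatch goal with
  | |- Ck ?n (fun _ _ _ _ => ?c) => apply Ck_const
  | |- Ck ?n (fun t _ _ _ => t) => apply (Ck_coord Dt)
  | |- Ck ?n (fun _ x _ _ => x) => apply (Ck_coord Dx)
  | |- Ck ?n (fun _ _ y _ => y) => apply (Ck_coord Dy)
  | |- Ck ?n (fun _ _ _ z => z) => apply (Ck_coord Dz)
  | |- Ck ?n (fun t x y z => ?g t x y z) => assumption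
  | |- Ck ?n (fun t x y z => @?a t x y z + @?b t x y z) => apply (Ck_plus n a b); Ck_auto
  | |- Ck ?n (fun t x y z => @?a t x y z - @?b t x y z) => apply (Ck_minus n a b); Ck_auto
  | |- Ck ?n (fun t x y z => - @?a t x y z) => apply (Ck_opp n a); Ck_auto
  | |- Ck ?n (fun t x y z => @?a t x y z * @?b t x y z) => apply (Ck_mult n a b); Ck_auto
  | |- Ck ?n (fun t x y z => @?a t x y z ^ ?m) => apply (Ck_pow n a m); Ck_auto
  | |- Ck ?n (fun t x y z => exp (@?a t x y z)) => apply (comp_smooth_exp n a); Ck_auto
  | |- Ck ?n (fun t x y z => sin (@?a t x y z)) => apply (proj1 comp_smooth_sin_cos n a); Ck_auto
  | |- Ck ?n (fun t x y z => cos (@?a t x y z)) => apply (proj2 comp_smooth_sin_cos n a); Ck_auto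
  | |- Ck ?n (fun t x y z => ?F (@?a t x y z)) =>
      lazymatch goal with H : comp_smooth F |- _ => apply (H n a); Ck_auto end
  end.

(* The linear system making Phi = Rz - X Q0 - X^2 Q1 a stream function with
   Laplacian s a1^2 Phi (Rz' = P0, Q0' = -P1, Q1' = -P2, and the Y-equations). *)
Definition profile_system (s a1 : R) (Rz P0 P1 P2 Q0 Q1 : R -> R) : Prop :=
  (forall y, derivable_pt_lim Rz y (P0 y)) /\
  (forall y, derivable_pt_lim P0 y (s * a1 ^ 2 * Rz y + 2 * Q1 y)) /\
  (forall y, derivable_pt_lim P1 y (- (s * a1 ^ 2 * Q0 y))) /\
  (forall y, derivable_pt_lim P2 y (- (s * a1 ^ 2 * Q1 y))) /\
  (forall y, derivable_pt_lim Q0 y (- P1 y)) /\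
  (forall y, derivable_pt_lim Q1 y (- P2 y)).

Lemma cos2_sin2 a : cos a ^ 2 + sin a ^ 2 = 1.
Proof. rewrite <- (sin2_cos2 a). unfold Rsqr; ring. Qed.

Lemma pow_SS_sin2 (sn cs : R) n : sn ^ 2 = 1 - cs ^ 2 -> sn ^ (S (S n)) = sn ^ n * (1 - cs ^ 2).
Proof. intros <-; simpl; ring. Qed.

(* After symbolic differentiation the MHD identities are rational identities in
   cos alpha, sin alpha, the exponentials and the profile values at Y, modulo
   cos^2 + sin^2 = 1: abstract these quantities, eliminate sin^2, and use [field]. *)
Ltac trig_field :=
  cbv beta; simpl INR;
  repeat match goal with |- context [?F (- ?x * sin ?a + ?y * cos ?a)] =>
     is_var F; generalize (F (- x * sin a + y * cos a)); intro end;
  repeat match goal with |- context [exp ?e] => generalize (exp e); intro end;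
  match goal with |- context [cos ?a] =>
    generalize (cos2_sin2 a); generalize (cos a), (sin a); intros cs sn Hcs end;
  repeat match goal with H : forall y : R, derivable_pt_lim _ _ _ |- _ => clear H end;
  ring_simplify;
  match goal with Hcs : ?cs ^ 2 + ?sn ^ 2 = 1 |- _ =>
    let Hsn := fresh in assert (Hsn : sn ^ 2 = 1 - cs ^ 2) by lra;
    repeat match goal with |- context [sn ^ (S (S ?m))] =>
      rewrite (pow_SS_sin2 sn cs m Hsn) end
  end;
  field; repeat split; assumption.

Section ProfileSolutions.

Variables (nu eta mu0 rho s k l a1 C1 C2 : R) (Rz P0 P1 P2 Q0 Q1 : R -> R).
Hypothesis rho_neq0 : rho <> 0.

(* The in-plane field W1 e1 + W2 e2 in Cartesian components. *)
Definition W_x (t x y : R) : R :=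
  let X := Xc k l t x y in let Y := Yc k l t x y in
  (P0 Y + X * P1 Y + X * X * P2 Y) * cos (alph k l t) - (Q0 Y + 2 * X * Q1 Y) * sin (alph k l t).
Definition W_y (t x y : R) : R :=
  let X := Xc k l t x y in let Y := Yc k l t x y in
  (P0 Y + X * P1 Y + X * X * P2 Y) * sin (alph k l t) + (Q0 Y + 2 * X * Q1 Y) * cos (alph k l t).

Definition velocity : vec := mkvec
  (fun t x y z => k * (- y) + C1 * exp (s * nu * a1 ^ 2 * t) * W_x t x y)
  (fun t x y z => k * x + C1 * exp (s * nu * a1 ^ 2 * t) * W_y t x y)
  (fun t x y z => 0).
Definition magnetic : vec := mkvec
  (fun t x y z => C2 * exp (s * eta * a1 ^ 2 * t) * W_x t x y)
  (fun t x y z => C2 * exp (s * eta * a1 ^ 2 * t) * W_y t x y)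
  (fun t x y z => 0).

Definition pressure : F4 := fun t x y z =>
  let X := Xc k l t x y in let Y := Yc k l t x y in
  let A := C1 * exp (s * nu * a1 ^ 2 * t) in let B := C2 * exp (s * eta * a1 ^ 2 * t) in
  let Phi := Rz Y - X * Q0 Y - X * X * Q1 Y in
  let W1 := P0 Y + X * P1 Y + X * X * P2 Y in let W2 := Q0 Y + 2 * X * Q1 Y in
  rho * (/ 2 * (k ^ 2 * (x * x + y * y) - 4 * k * A * Phi - A * A * (W1 * W1 + W2 * W2)
                + (A * A + mu0 * (B * B)) * s * a1 ^ 2 * (Phi * Phi))).

Ltac unfold_fields := unfold MHD, divg, momentum_comp, induction_comp, lap, advect, rot, cross,
  velocity, magnetic, pressure, W_x, W_y, Xc, Yc, alph; cbn [cx cy cz]; cbv zeta.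

Section Equations.

Hypothesis profiles : profile_system s a1 Rz P0 P1 P2 Q0 Q1.

Ltac profile_hyps := destruct profiles as (HRz & HP0 & HP1 & HP2 & HQ0 & HQ1).

(* Both fields are solenoidal: W is the rotated gradient of the stream function. *)
Lemma fields_divergence_free t x y z :
  divg velocity t x y z = 0 /\ divg magnetic t x y z = 0.
Proof. profile_hyps; split; unfold_fields; repeat pd_step; trig_field. Qed.

(* Momentum balance: here the eigenfunction property Lap Phi = s a1^2 Phi is used. *)
Lemma momentum_balance t x y z :
  momentum_comp nu mu0 rho cx Dx velocity magnetic pressure t x y z /\
  momentum_comp nu mu0 rho cy Dy velocity magnetic pressure t x y z /\
  momentum_comp nu mu0 rho cz Dz velocity magnetic pressure t x y z.
Proof. profile_hyps; repeat split; unfold_fields; repeat pd_step; trig_field. Qed.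

Lemma induction_balance t x y z :
  induction_comp eta cx velocity magnetic t x y z /\
  induction_comp eta cy velocity magnetic t x y z /\
  induction_comp eta cz velocity magnetic t x y z.
Proof. profile_hyps; repeat split; unfold_fields; repeat pd_step; trig_field. Qed.

Lemma profile_MHD : MHD nu eta mu0 rho velocity magnetic pressure.
Proof.
  intros t x y z.
  destruct (fields_divergence_free t x y z) as [Dv DH].
  destruct (momentum_balance t x y z) as (Mx & My & Mz).
  destruct (induction_balance t x y z) as (Ix & Iy & Iz).
  repeat split; assumption.
Qed.

End Equations.

Lemma profile_smooth :
  comp_smooth Rz -> comp_smooth P0 -> comp_smooth P1 -> comp_smooth P2 ->
  comp_smooth Q0 -> comp_smooth Q1 ->
  smooth pressure /\ smooth_vec velocity /\ smooth_vec magnetic.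
Proof.
  intros; unfold smooth_vec, velocity, magnetic, pressure, W_x, W_y, Xc, Yc, alph; cbn [cx cy cz].
  repeat split; apply smooth_of_Ck; intro n; cbv zeta; Ck_auto.
Qed.

End ProfileSolutions.

Lemma vec_ext (f1 f2 f3 g1 g2 g3 : F4) :
  (forall t x y z, f1 t x y z = g1 t x y z) -> (forall t x y z, f2 t x y z = g2 t x y z) ->
  (forall t x y z, f3 t x y z = g3 t x y z) -> mkvec f1 f2 f3 = mkvec g1 g2 g3.
Proof.
  intros E1 E2 E3.
  replace g1 with f1 by (do 4 (apply functional_extensionality; intro); apply E1).
  replace g2 with f2 by (do 4 (apply functional_extensionality; intro); apply E2).
  replace g3 with f3 by (do 4 (apply functional_extensionality; intro); apply E3).
  reflexivity.
Qed.

(* In both cases W1 = a1 (theta + a2 Y phi) - a1 X zeta - a1^2 a2 X^2 psi and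
   W2 = xi + 2 a1 a2 X phi, i.e. P0 = a1 (theta + a2 Y phi), P1 = - a1 zeta,
   P2 = - a1^2 a2 psi, Q0 = xi, Q1 = a1 a2 phi; Rz is the primitive of P0 required by
   [profile_system].  It involves 1/a1; for a1 = 0 all profiles but Q0 vanish and
   Rz = 0 works. *)
Definition Rz_exp (a1 a2 a b1 c1 Y : R) : R := if Req_EM_T a1 0 then 0 else
  (b1 * exp (a1 * Y) + c1 * exp (- (a1 * Y))) +
  a2 * (Y * (exp (a1 * Y) + a * exp (- (a1 * Y))) - (exp (a1 * Y) - a * exp (- (a1 * Y))) * / a1).
Definition P0_exp (a1 a2 a b1 c1 Y : R) : R :=
  a1 * (b1 * exp (a1 * Y) - c1 * exp (- (a1 * Y))) + a1 * a2 * Y * (exp (a1 * Y) - a * exp (- (a1 * Y))).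
Definition P1_exp (a1 b c Y : R) : R := - (a1 * (b * exp (a1 * Y) + c * exp (- (a1 * Y)))).
Definition P2_exp (a1 a2 a Y : R) : R := - (a1 * a1 * a2 * (exp (a1 * Y) + a * exp (- (a1 * Y)))).
Definition Q0_exp (a1 b c Y : R) : R := b * exp (a1 * Y) - c * exp (- (a1 * Y)).
Definition Q1_exp (a1 a2 a Y : R) : R := a1 * a2 * (exp (a1 * Y) - a * exp (- (a1 * Y))).

Lemma exp_profiles a1 a2 a b c b1 c1 :
  let Rz := Rz_exp a1 a2 a b1 c1 in let P0 := P0_exp a1 a2 a b1 c1 in
  let P1 := P1_exp a1 b c in let P2 := P2_exp a1 a2 a in
  let Q0 := Q0_exp a1 b c in let Q1 := Q1_exp a1 a2 a in
  profile_system ((-1) ^ 0) a1 Rz P0 P1 P2 Q0 Q1 /\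
  comp_smooth Rz /\ comp_smooth P0 /\ comp_smooth P1 /\ comp_smooth P2 /\
  comp_smooth Q0 /\ comp_smooth Q1.
Proof.
  unfold profile_system, comp_smooth, Rz_exp, P0_exp, P1_exp, P2_exp, Q0_exp, Q1_exp; simpl pow.
  destruct (Req_EM_T a1 0) as [->|Ha1]; repeat split; intros; cbv beta iota;
    first [ deriv_goal; first [ring | field; exact Ha1] | Ck_auto ].
Qed.

Definition Rz_trig (a1 a2 b1 c1 Y : R) : R := if Req_EM_T a1 0 then 0 else
  - (c1 * cos (a1 * Y + b1)) + a2 * (- (Y * cos (a1 * Y)) + sin (a1 * Y) * / a1).
Definition P0_trig (a1 a2 b1 c1 Y : R) : R :=
  a1 * (c1 * sin (a1 * Y + b1)) + a1 * a2 * Y * sin (a1 * Y).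
Definition P1_trig (a1 b c Y : R) : R := - (a1 * (c * cos (a1 * Y + b))).
Definition P2_trig (a1 a2 Y : R) : R := - (a1 * a1 * a2 * cos (a1 * Y)).
Definition Q0_trig (a1 b c Y : R) : R := c * sin (a1 * Y + b).
Definition Q1_trig (a1 a2 Y : R) : R := a1 * a2 * sin (a1 * Y).

Lemma trig_profiles a1 a2 b c b1 c1 :
  let Rz := Rz_trig a1 a2 b1 c1 in let P0 := P0_trig a1 a2 b1 c1 in
  let P1 := P1_trig a1 b c in let P2 := P2_trig a1 a2 in
  let Q0 := Q0_trig a1 b c in let Q1 := Q1_trig a1 a2 in
  profile_system ((-1) ^ 1) a1 Rz P0 P1 P2 Q0 Q1 /\
  comp_smooth Rz /\ comp_smooth P0 /\ comp_smooth P1 /\ comp_smooth P2 /\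
  comp_smooth Q0 /\ comp_smooth Q1.
Proof.
  unfold profile_system, comp_smooth, Rz_trig, P0_trig, P1_trig, P2_trig, Q0_trig, Q1_trig; simpl pow.
  destruct (Req_EM_T a1 0) as [->|Ha1]; repeat split; intros; cbv beta iota;
    first [ deriv_goal; first [ring | field; exact Ha1] | Ck_auto ].
Qed.

Lemma fields_exp nu eta k l a1 a2 C1 C2 a b c b1 c1 :
  let P0 := P0_exp a1 a2 a b1 c1 in let P1 := P1_exp a1 b c in let P2 := P2_exp a1 a2 a in
  let Q0 := Q0_exp a1 b c in let Q1 := Q1_exp a1 a2 a in
  vsol nu 0 k l a1 a2 C1 a b c b1 c1 = velocity nu ((-1) ^ 0) k l a1 C1 P0 P1 P2 Q0 Q1 /\
  Hsol eta 0 k l a1 a2 C2 a b c b1 c1 = magnetic eta ((-1) ^ 0) k l a1 C2 P0 P1 P2 Q0 Q1.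
Proof.
  split; apply vec_ext; intros; unfold velocity, magnetic, W_x, W_y, S1, S2, W1, W2,
    phiF, psiF, xiF, zetaF, thetaF, P0_exp, P1_exp, P2_exp, Q0_exp, Q1_exp; cbv zeta; ring.
Qed.

Lemma fields_trig nu eta k l a1 a2 C1 C2 a b c b1 c1 :
  let P0 := P0_trig a1 a2 b1 c1 in let P1 := P1_trig a1 b c in let P2 := P2_trig a1 a2 in
  let Q0 := Q0_trig a1 b c in let Q1 := Q1_trig a1 a2 in
  vsol nu 1 k l a1 a2 C1 a b c b1 c1 = velocity nu ((-1) ^ 1) k l a1 C1 P0 P1 P2 Q0 Q1 /\
  Hsol eta 1 k l a1 a2 C2 a b c b1 c1 = magnetic eta ((-1) ^ 1) k l a1 C2 P0 P1 P2 Q0 Q1.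
Proof.
  split; apply vec_ext; intros; unfold velocity, magnetic, W_x, W_y, S1, S2, W1, W2,
    phiF, psiF, xiF, zetaF, thetaF, P0_trig, P1_trig, P2_trig, Q0_trig, Q1_trig; cbv zeta; ring.
Qed.

Lemma solution_from_profiles nu eta mu0 rho s k l a1 C1 C2 (Rz P0 P1 P2 Q0 Q1 : R -> R) :
  rho <> 0 -> profile_system s a1 Rz P0 P1 P2 Q0 Q1 ->
  comp_smooth Rz -> comp_smooth P0 -> comp_smooth P1 -> comp_smooth P2 ->
  comp_smooth Q0 -> comp_smooth Q1 ->
  exists p : F4,
    smooth p /\
    smooth_vec (velocity nu s k l a1 C1 P0 P1 P2 Q0 Q1) /\
    smooth_vec (magnetic eta s k l a1 C2 P0 P1 P2 Q0 Q1) /\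
    MHD nu eta mu0 rho (velocity nu s k l a1 C1 P0 P1 P2 Q0 Q1)
      (magnetic eta s k l a1 C2 P0 P1 P2 Q0 Q1) p.
Proof.
  intros Hrho Hsys HR H0 H1 H2 H3 H4.
  exists (pressure nu eta mu0 rho s k l a1 C1 C2 Rz P0 P1 P2 Q0 Q1).
  destruct (profile_smooth nu eta mu0 rho s k l a1 C1 C2 Rz P0 P1 P2 Q0 Q1 HR H0 H1 H2 H3 H4)
    as (Hp & Hv & HH).
  refine (conj Hp (conj Hv (conj HH _))). apply profile_MHD; assumption.
Qed.

Theorem mainTheorem7 :
  forall (nu eta mu0 rho : R), 0 < nu -> 0 < eta -> 0 < mu0 -> 0 < rho ->
  forall (r : nat), (r = 0%nat \/ r = 1%nat) ->
  forall (k l a1 a2 C1 C2 a b c b1 c1 : R),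
  exists p : F4,
    smooth p /\
    smooth_vec (vsol nu r k l a1 a2 C1 a b c b1 c1) /\
    smooth_vec (Hsol eta r k l a1 a2 C2 a b c b1 c1) /\
    MHD nu eta mu0 rho (vsol nu r k l a1 a2 C1 a b c b1 c1)
                       (Hsol eta r k l a1 a2 C2 a b c b1 c1) p.
Proof.
  intros nu eta mu0 rho _ _ _ Hrho r Hr k l a1 a2 C1 C2 a b c b1 c1.
  assert (Hrho0 : rho <> 0) by lra.
  destruct Hr as [-> | ->].
  - destruct (fields_exp nu eta k l a1 a2 C1 C2 a b c b1 c1) as [-> ->].
    destruct (exp_profiles a1 a2 a b c b1 c1) as (Hsys & HR & H0 & H1 & H2 & H3 & H4).
    exact (solution_from_profiles _ _ mu0 _ _ _ _ _ _ _ _ _ _ _ _ _ Hrho0 Hsys HR H0 H1 H2 H3 H4).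
  - destruct (fields_trig nu eta k l a1 a2 C1 C2 a b c b1 c1) as [-> ->].
    destruct (trig_profiles a1 a2 b c b1 c1) as (Hsys & HR & H0 & H1 & H2 & H3 & H4).
    exact (solution_from_profiles _ _ mu0 _ _ _ _ _ _ _ _ _ _ _ _ _ Hrho0 Hsys HR H0 H1 H2 H3 H4).
Qed.
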